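(* Let $\sigma(x)=\sum_{k=0}^\infty\sigma_kL_k(x)$ on $I=(-1,1)$, and for $m,n\ge2$ let $a^{(0)}_{m,n}:=\int_{-1}^1\sigma(x)\,\eta_m(x)\,\eta_n(x)\,dx$. If there exist $\eta>0$ and a constant $C_\eta>0$ depending only on $\eta$ such that $|\sigma_k|\le C_\eta e^{-\eta k}$ for all $k\ge0$, then $$|a^{(0)}_{m,n}|\le Ce^{-\eta|n-m|}\qquad\forall\, n,m\ge2,$$ where $C$ is a constant depending only on $\eta$.
   Context: $I=(-1,1)$. $L_k$ denotes the Legendre polynomial of degree $k$ normalized by $L_k(1)=1$. The Babuška–Shen basis is $\eta_k(x)=\frac{1}{\sqrt{4k-2}}(L_{k-2}(x)-L_k(x))$, $k\ge2$. *)

From Stdlib Require Import Reals.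
From Coquelicot Require Import Coquelicot.
Open Scope R_scope.

(* Legendre pair (L_k x, L_{k+1} x) via Bonnet's recurrence
   (k+2) L_{k+2} = (2k+3) x L_{k+1} - (k+1) L_k, with L_0 = 1, L_1 = x;
   this is the standard normalization L_k(1) = 1. *)
Fixpoint legendre_pair (k : nat) (x : R) : R * R :=
  match k with
  | O => (1, x)
  | S k' => let (a, b) := legendre_pair k' x in
            (b, ((2 * INR k' + 3) * x * b - (INR k' + 1) * a) / (INR k' + 2))
  end.

Definition legendre (k : nat) (x : R) : R := fst (legendre_pair k x).

Definition bs_eta (k : nat) (x : R) : R :=
  (legendre (k - 2) x - legendre k x) / sqrt (4 * INR k - 2).

Definition legendre_series (s : nat -> R) (x : R) : R :=
  Series (fun k => s k * legendre k x).

Definition a0 (s : nat -> R) (m n : nat) : R :=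
  RInt (fun x => legendre_series s x * bs_eta m x * bs_eta n x) (-1) 1.

From Stdlib Require Import Reals Lra Lia.
From Coquelicot Require Import Coquelicot.
Open Scope R_scope.

(* Expanding [sigma] in the Legendre basis, [a0 s m n = sum_k s_k c_k] with
   [c_k = int L_k eta_m eta_n].  Each [c_k] is bounded by 2, since [|L_k| <= 1] on [[-1, 1]].
   Moreover [eta_m eta_n] is a combination of products [L_a L_b] with [a <= n], [b <= m];
   since [L_a] is orthogonal to every polynomial of degree [< a], [c_k = 0] as soon as
   [k + m + 2 < n].  Hence only the terms [k >= |n - m| - 2] survive, and their sum is
   bounded by a geometric tail [2 C_eta e^{-eta (|n - m| - 2)} / (1 - e^{-eta})]. *)

Local Notation L := legendre.

Lemma legendre_0 x : L 0 x = 1.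
Proof. reflexivity. Qed.

Lemma legendre_1 x : L 1 x = x.
Proof. reflexivity. Qed.

Lemma legendre_pair_eq k x : legendre_pair k x = (L k x, L (S k) x).
Proof. unfold legendre; simpl. destruct (legendre_pair k x); reflexivity. Qed.

Lemma legendre_SS k x :
  L (S (S k)) x = ((2 * INR k + 3) * x * L (S k) x - (INR k + 1) * L k x) / (INR k + 2).
Proof. unfold legendre at 1; simpl. rewrite legendre_pair_eq. reflexivity. Qed.

Lemma x_mul_legendre_S k x :
  x * L (S k) x = ((INR k + 2) * L (S (S k)) x + (INR k + 1) * L k x) / (2 * INR k + 3).
Proof. pose proof (pos_INR k). rewrite legendre_SS. field. lra. Qed.

Lemma legendre_endpoints k : L k 1 = 1 /\ L k (-1) = (-1) ^ k.
Proof.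
  enough (H : (L k 1 = 1 /\ L k (-1) = (-1) ^ k) /\
              (L (S k) 1 = 1 /\ L (S k) (-1) = (-1) ^ S k)) by apply H.
  induction k as [|k [[A B] [C D]]].
  { rewrite !legendre_0, !legendre_1; simpl; lra. }
  pose proof (pos_INR k).
  split; [split; assumption|].
  rewrite !legendre_SS, A, B, C, D; simpl; split; field; lra.
Qed.

Fixpoint legendre_deriv (k : nat) (x : R) : R :=
  match k with
  | O => 0
  | S k' => x * legendre_deriv k' x + (INR k' + 1) * L k' x
  end.

Local Notation dL := legendre_deriv.

Lemma legendre_deriv_rec k x : x * dL (S k) x - dL k x = (INR k + 1) * L (S k) x.
Proof.
  induction k as [|k IH]; [simpl; rewrite legendre_0, legendre_1; ring|].
  pose proof (pos_INR k).
  assert (IHx : x * (x * dL (S k) x - dL k x) = x * ((INR k + 1) * L (S k) x)) by now rewrite IH.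
  assert (HD1 : dL (S k) x = x * dL k x + (INR k + 1) * L k x) by reflexivity.
  change (dL (S (S k)) x) with (x * dL (S k) x + (INR (S k) + 1) * L (S k) x).
  rewrite legendre_SS, S_INR.
  replace ((INR k + 1 + 1) * (((2 * INR k + 3) * x * L (S k) x - (INR k + 1) * L k x) / (INR k + 2)))
    with ((2 * INR k + 3) * x * L (S k) x - (INR k + 1) * L k x) by (field; lra).
  lra.
Qed.

Lemma is_derive_legendre k x : is_derive (L k) x (dL k x).
Proof.
  revert x.
  enough (H : (forall x, is_derive (L k) x (dL k x)) /\
              (forall x, is_derive (L (S k)) x (dL (S k) x))) by apply H.
  induction k as [|k [IH0 IH1]].
  - split; intro x; [apply (is_derive_ext (fun _ => 1)) | apply (is_derive_ext (fun t => t))];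
      try reflexivity; auto_derive; auto; simpl; rewrite ?legendre_0; ring.
  - split; [exact IH1|]. intro x.
    apply (is_derive_ext (fun t => ((2 * INR k + 3) * t * L (S k) t - (INR k + 1) * L k t) / (INR k + 2))).
    { intro t. symmetry; apply legendre_SS. }
    pose proof (pos_INR k).
    auto_derive.
    { repeat split; try (eexists; apply IH0 || apply IH1); lra. }
    replace (Derive (fun t : R => L k t) x) with (dL k x)
      by (symmetry; apply is_derive_unique, IH0).
    replace (Derive (fun t : R => L (S k) t) x) with (dL (S k) x)
      by (symmetry; apply is_derive_unique, IH1).
    change (dL (S (S k)) x) with (x * dL (S k) x + (INR (S k) + 1) * L (S k) x).
    assert (Hrec : (INR k + 1) * (x * dL (S k) x - dL k x) = (INR k + 1) * ((INR k + 1) * L (S k) x))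
      by now rewrite legendre_deriv_rec.
    rewrite S_INR. apply (Rmult_eq_reg_r (INR k + 2)); [|lra].
    rewrite Rmult_assoc, Rinv_l, Rmult_1_r by lra.
    lra.
Qed.

Lemma ex_derive_legendre k x : ex_derive (L k) x.
Proof. exists (dL k x). apply is_derive_legendre. Qed.

Lemma Derive_legendre k x : Derive (L k) x = dL k x.
Proof. apply is_derive_unique, is_derive_legendre. Qed.

Lemma continuous_legendre k x : continuous (L k) x.
Proof. apply (ex_derive_continuous (K := R_AbsRing) (V := R_NormedModule)), ex_derive_legendre. Qed.

Lemma legendre_deriv_SS_minus k x : dL (S (S k)) x - dL k x = (2 * INR k + 3) * L (S k) x.
Proof.
  pose proof (legendre_deriv_rec k x).
  change (dL (S (S k)) x) with (x * dL (S k) x + (INR (S k) + 1) * L (S k) x).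
  rewrite S_INR. lra.
Qed.

(* [(L_{k+2} - L_k) / (2k+3)] is a primitive of [L_{k+1}] vanishing at both endpoints. *)
Lemma is_RInt_legendre_S k : is_RInt (L (S k)) (-1) 1 0.
Proof.
  pose proof (pos_INR k).
  set (F x := (L (S (S k)) x - L k x) / (2 * INR k + 3)).
  replace 0 with (minus (F 1) (F (-1))).
  2:{ unfold F. destruct (legendre_endpoints k) as [-> ->].
      destruct (legendre_endpoints (S (S k))) as [-> ->].
      unfold minus, plus, opp; simpl. field. lra. }
  apply (is_RInt_derive (V := R_CompleteNormedModule)).
  - intros x _. unfold F. auto_derive; [repeat split; apply ex_derive_legendre|].
    rewrite !Derive_legendre.
    replace (1 * dL (S (S k)) x + - (1 * dL k x)) with (dL (S (S k)) x - dL k x) by ring.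
    rewrite legendre_deriv_SS_minus. field. lra.
  - intros y _. apply continuous_legendre.
Qed.

Lemma legendre_energy_S k x :
  L (S k) x ^ 2 + (1 - x ^ 2) * (dL (S k) x / (INR k + 1)) ^ 2
  = L k x ^ 2 + (1 - x ^ 2) * (dL k x / (INR k + 1)) ^ 2.
Proof.
  pose proof (pos_INR k).
  assert (HL : L (S k) x = x * L k x - (1 - x ^ 2) * dL k x / (INR k + 1)).
  { pose proof (legendre_deriv_rec k x) as Hrec.
    change (dL (S k) x) with (x * dL k x + (INR k + 1) * L k x) in Hrec.
    apply (Rmult_eq_reg_l (INR k + 1)); [|lra].
    field_simplify; [|lra]. lra. }
  rewrite HL. simpl dL. field. lra.
Qed.

(* The "energy" [L_k^2 + (1 - x^2) (L_k'/k)^2] equals 1 for [k = 1] and decreases with [k]. *)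
Lemma legendre_energy_le_1 k x : -1 <= x <= 1 ->
  L (S k) x ^ 2 + (1 - x ^ 2) * (dL (S k) x / INR (S k)) ^ 2 <= 1.
Proof.
  intro Hx. assert (Hs : 0 <= 1 - x ^ 2) by nra.
  induction k as [|k IH].
  - rewrite legendre_1. simpl. rewrite legendre_0. field_simplify; lra.
  - pose proof (pos_INR k).
    rewrite (S_INR (S k)), legendre_energy_S.
    eapply Rle_trans; [|exact IH].
    apply Rplus_le_compat_l, Rmult_le_compat_l; [exact Hs|].
    rewrite S_INR. unfold Rdiv. rewrite !Rpow_mult_distr.
    apply Rmult_le_compat_l; [apply pow2_ge_0|].
    apply pow_incr. split.
    + left; apply Rinv_0_lt_compat; lra.
    + apply Rinv_le_contravar; lra.
Qed.

Lemma Rabs_legendre_le_1 k x : -1 <= x <= 1 -> Rabs (L k x) <= 1.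
Proof.
  intro Hx. destruct k as [|k]; [rewrite legendre_0, Rabs_R1; lra|].
  pose proof (legendre_energy_le_1 k x Hx).
  assert (0 <= (1 - x ^ 2) * (dL (S k) x / INR (S k)) ^ 2)
    by (apply Rmult_le_pos; [nra | apply pow2_ge_0]).
  rewrite <- Rabs_R1. apply Rsqr_le_abs_0. unfold Rsqr. nra.
Qed.

Definition zero_integral (f : R -> R) : Prop := is_RInt f (-1) 1 0.

Lemma zero_integral_ext f g : (forall x, f x = g x) -> zero_integral g -> zero_integral f.
Proof. intros Hfg Hg. apply (is_RInt_ext g); [intros x _; symmetry; apply Hfg | exact Hg]. Qed.

Lemma zero_integral_comb f g c d :
  zero_integral f -> zero_integral g -> zero_integral (fun x => c * f x + d * g x).
Proof.
  intros Hf Hg. unfold zero_integral.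
  replace 0 with (plus (scal c 0) (scal d 0)) by (unfold plus, scal; simpl; unfold mult; simpl; ring).
  apply (is_RInt_plus (V := R_NormedModule)); apply (is_RInt_scal (V := R_NormedModule)); assumption.
Qed.

Lemma zero_integral_legendre_mul_x (g : R -> R) (t : nat) :
  (forall a, (t < a)%nat -> zero_integral (fun x => L a x * g x)) ->
  forall a, (S t < a)%nat -> zero_integral (fun x => L a x * (x * g x)).
Proof.
  intros Hg [|a] Ha; [lia|].
  pose proof (pos_INR a).
  apply (zero_integral_ext _ (fun x => (INR a + 2) / (2 * INR a + 3) * (L (S (S a)) x * g x)
                                     + (INR a + 1) / (2 * INR a + 3) * (L a x * g x))).
  { intro x. rewrite <- Rmult_assoc, (Rmult_comm _ x), x_mul_legendre_S. field. lra. }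
  apply zero_integral_comb; apply Hg; lia.
Qed.

(* By the three-term recurrence, [L_k g] is a combination of the [x^j g] with [j <= k]. *)
Lemma zero_integral_legendre_mul (g : R -> R) (t : nat) :
  (forall a, (t < a)%nat -> zero_integral (fun x => L a x * g x)) ->
  forall k a, (k + t < a)%nat -> zero_integral (fun x => L a x * (L k x * g x)).
Proof.
  intros Hg k.
  enough (H : (forall a, (k + t < a)%nat -> zero_integral (fun x => L a x * (L k x * g x))) /\
              (forall a, (S k + t < a)%nat -> zero_integral (fun x => L a x * (L (S k) x * g x))))
    by apply H.
  induction k as [|k [IH0 IH1]]; split.
  - intros a Ha. apply (zero_integral_ext _ (fun x => L a x * g x)).
    { intro x. rewrite legendre_0. ring. }
    apply Hg. lia.
  - intros a Ha. apply (zero_integral_ext _ (fun x => L a x * (x * g x))).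
    { intro x. rewrite legendre_1. ring. }
    apply (zero_integral_legendre_mul_x g t Hg). lia.
  - exact IH1.
  - intros a Ha. pose proof (pos_INR k).
    apply (zero_integral_ext _ (fun x => (2 * INR k + 3) / (INR k + 2) * (L a x * (x * (L (S k) x * g x)))
                                       + - (INR k + 1) / (INR k + 2) * (L a x * (L k x * g x)))).
    { intro x. rewrite legendre_SS. field. lra. }
    apply zero_integral_comb.
    + apply (zero_integral_legendre_mul_x _ (S k + t)); [exact IH1 | lia].
    + apply IH0. lia.
Qed.

Lemma legendre_orthogonal b a : (b < a)%nat -> zero_integral (fun x => L a x * L b x).
Proof.
  intro Hba. apply (zero_integral_ext _ (fun x => L a x * (L b x * 1))); [intro; ring|].
  apply (zero_integral_legendre_mul _ 0); [|lia].
  intros [|a'] Ha; [lia|].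
  apply (zero_integral_ext _ (L (S a'))); [intro; ring|].
  apply is_RInt_legendre_S.
Qed.

Lemma legendre_triple_zero k b a :
  (k + b < a)%nat -> zero_integral (fun x => L a x * (L k x * L b x)).
Proof. apply zero_integral_legendre_mul, legendre_orthogonal. Qed.

Lemma continuous_bs_eta m x : continuous (bs_eta m) x.
Proof.
  apply (continuous_mult (K := R_AbsRing) (fun y => L (m - 2) y - L m y) (fun _ => / sqrt (4 * INR m - 2))).
  - apply (continuous_minus (K := R_AbsRing) (V := R_NormedModule)); apply continuous_legendre.
  - apply continuous_const.
Qed.

Lemma Rabs_bs_eta_le_1 m x : (2 <= m)%nat -> -1 <= x <= 1 -> Rabs (bs_eta m x) <= 1.
Proof.
  intros Hm Hx. unfold bs_eta.
  assert (Hm' : 2 <= INR m) by (apply (le_INR 2); exact Hm).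
  assert (Hs : 2 <= sqrt (4 * INR m - 2)).
  { rewrite <- (sqrt_square 2) at 1 by lra. apply sqrt_le_1; lra. }
  pose proof (Rabs_legendre_le_1 (m - 2) x Hx). pose proof (Rabs_legendre_le_1 m x Hx).
  pose proof (Rabs_triang (L (m - 2) x) (- L m x)). rewrite Rabs_Ropp in *.
  unfold Rdiv. rewrite Rabs_mult, Rabs_inv, (Rabs_right (sqrt _)) by lra.
  apply (Rmult_le_reg_r (sqrt (4 * INR m - 2))); [lra|].
  rewrite Rmult_assoc, Rinv_l by lra. unfold Rminus in *. lra.
Qed.

Lemma Rabs_bs_eta_mul_le_1 m n x : (2 <= m)%nat -> (2 <= n)%nat -> -1 <= x <= 1 ->
  Rabs (bs_eta m x * bs_eta n x) <= 1.
Proof.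
  intros Hm Hn Hx. rewrite Rabs_mult.
  pose proof (Rabs_bs_eta_le_1 m x Hm Hx). pose proof (Rabs_bs_eta_le_1 n x Hn Hx).
  pose proof (Rabs_pos (bs_eta m x)). nra.
Qed.

(* The Legendre coefficients of [eta_m eta_n], up to the normalization [(2k+1)/2]. *)
Definition bs_coef (m n k : nat) : R :=
  RInt (fun x => L k x * (bs_eta m x * bs_eta n x)) (-1) 1.

Lemma ex_RInt_bs_coef m n k : ex_RInt (fun x => L k x * (bs_eta m x * bs_eta n x)) (-1) 1.
Proof.
  apply (ex_RInt_continuous (V := R_CompleteNormedModule)). intros x _.
  apply (continuous_mult (K := R_AbsRing)); [apply continuous_legendre|].
  apply (continuous_mult (K := R_AbsRing)); apply continuous_bs_eta.
Qed.

Lemma Rabs_bs_coef_le_2 m n k : (2 <= m)%nat -> (2 <= n)%nat -> Rabs (bs_coef m n k) <= 2.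
Proof.
  intros Hm Hn. unfold bs_coef.
  replace 2 with ((1 - -1) * 1) by ring.
  apply abs_RInt_le_const; [lra | apply ex_RInt_bs_coef |].
  intros x Hx. rewrite Rabs_mult.
  pose proof (Rabs_legendre_le_1 k x Hx). pose proof (Rabs_bs_eta_mul_le_1 m n x Hm Hn Hx).
  pose proof (Rabs_pos (L k x)). nra.
Qed.

Lemma bs_coef_zero m n k : (k + m + 2 < n)%nat -> bs_coef m n k = 0.
Proof.
  intro Hkmn. unfold bs_coef, bs_eta. apply is_RInt_unique.
  set (c := / (sqrt (4 * INR m - 2) * sqrt (4 * INR n - 2))).
  apply (zero_integral_ext _ (fun x =>
    c * (1 * (L (n - 2) x * (L k x * L (m - 2) x)) + -1 * (L (n - 2) x * (L k x * L m x)))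
    + - c * (1 * (L n x * (L k x * L (m - 2) x)) + -1 * (L n x * (L k x * L m x))))).
  { intro x. unfold c, Rdiv. rewrite Rinv_mult. ring. }
  apply zero_integral_comb; apply zero_integral_comb; apply legendre_triple_zero; lia.
Qed.

Section GeometricDomination.

Variables (a : nat -> R) (A q : R).
Hypotheses (Hq : 0 <= q < 1) (HA : 0 <= A) (Ha : forall k, Rabs (a k) <= A * q ^ k).

Lemma Rabs_sum_n_add_minus_le N p :
  Rabs (sum_n a (N + p) - sum_n a N) <= A * (q ^ S N - q ^ S (N + p)) / (1 - q).
Proof.
  induction p as [|p IH].
  - rewrite Nat.add_0_r, !Rminus_diag, Rabs_R0. right. unfold Rdiv. ring.
  - rewrite Nat.add_succ_r, sum_Sn.
    replace (plus (sum_n a (N + p)) (a (S (N + p))) - sum_n a N)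
      with ((sum_n a (N + p) - sum_n a N) + a (S (N + p))) by (unfold plus; simpl; ring).
    eapply Rle_trans; [apply Rabs_triang|].
    eapply Rle_trans; [apply Rplus_le_compat; [exact IH | apply Ha]|].
    right. simpl. field. lra.
Qed.

Lemma ex_series_geom_dominated : ex_series a.
Proof.
  apply (ex_series_le (K := R_AbsRing) (V := R_CompleteNormedModule) a (fun k => A * q ^ k)).
  - intro k. apply Ha.
  - apply (ex_series_scal_l (K := R_AbsRing) (V := R_NormedModule) A (fun k => q ^ k)).
    apply ex_series_geom. rewrite Rabs_right; lra.
Qed.

Lemma Rabs_Series_minus_sum_n_le N : Rabs (Series a - sum_n a N) <= A * q ^ S N / (1 - q).
Proof.
  assert (Hlim := is_lim_seq_abs _ _ (is_lim_seq_minus' _ _ _ _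
                   (Series_correct a ex_series_geom_dominated) (is_lim_seq_const (sum_n a N)))).
  refine (is_lim_seq_le_loc _ _ _ _ _ Hlim (is_lim_seq_const (A * q ^ S N / (1 - q)))).
  exists N. intros M HM. replace M with (N + (M - N))%nat by lia.
  eapply Rle_trans; [apply Rabs_sum_n_add_minus_le|].
  apply Rmult_le_compat_r; [left; apply Rinv_0_lt_compat; lra|].
  apply Rmult_le_compat_l; [exact HA|].
  pose proof (pow_le q (S (N + (M - N)))). lra.
Qed.

Lemma Rabs_Series_le_of_vanishing K :
  (forall k, (k < K)%nat -> a k = 0) -> Rabs (Series a) <= A * q ^ K / (1 - q).
Proof.
  intro Hzero. destruct K as [|K].
  - pose proof (Rabs_Series_minus_sum_n_le 0) as Htail. rewrite sum_O in Htail.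
    pose proof (Ha 0). pose proof (Rabs_triang (Series a - a 0%nat) (a 0%nat)) as Htri.
    replace (Series a - a 0%nat + a 0%nat) with (Series a) in Htri by ring.
    replace (A * q ^ 0 / (1 - q)) with (A * q ^ 1 / (1 - q) + A * q ^ 0) by (simpl; field; lra).
    lra.
  - replace (Series a) with (Series a - sum_n a K).
    + apply Rabs_Series_minus_sum_n_le.
    + rewrite (sum_n_ext_loc a (fun _ => 0)) by (intros k Hk; apply Hzero; lia).
      rewrite sum_n_const, Rmult_0_r. ring.
Qed.

End GeometricDomination.

Lemma is_RInt_sum_n (F : nat -> R -> R) (I : nat -> R) (a b : R) N :
  (forall k, is_RInt (F k) a b (I k)) ->
  is_RInt (fun x => sum_n (fun k => F k x) N) a b (sum_n I N).
Proof.
  intro HF. induction N as [|N IH].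
  - rewrite sum_O. apply (is_RInt_ext (F 0%nat)); [intros; rewrite sum_O; reflexivity | apply HF].
  - rewrite sum_Sn.
    apply (is_RInt_ext (fun x => plus (sum_n (fun k => F k x) N) (F (S N) x))).
    { intros x _. rewrite sum_Sn. reflexivity. }
    apply (is_RInt_plus (V := R_NormedModule)); [exact IH | apply HF].
Qed.

Lemma filterlim_fct_of_bound (f : nat -> R -> R) (g : R -> R) (beta : nat -> R) :
  (forall N x, Rabs (f N x - g x) <= beta N) -> is_lim_seq beta 0 ->
  filterlim f eventually (locally (T := fct_UniformSpace R R_CompleteNormedModule) g).
Proof.
  intros Hfg Hbeta P [eps HP].
  destruct (Hbeta (ball 0 eps) (locally_ball 0 eps)) as [N0 HN0].
  exists N0. intros N HN. apply HP. intro x.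
  specialize (HN0 N HN). specialize (Hfg N x).
  change (Rabs (f N x - g x) < eps).
  change (Rabs (beta N - 0) < eps) in HN0.
  rewrite Rminus_0_r in HN0. pose proof (Rle_abs (beta N)). lra.
Qed.

Definition clamp (y : R) : R := Rmax (-1) (Rmin 1 y).

Lemma clamp_in y : -1 <= clamp y <= 1.
Proof. unfold clamp, Rmax, Rmin. repeat destruct Rle_dec; lra. Qed.

Lemma clamp_id y : -1 <= y <= 1 -> clamp y = y.
Proof. intro. unfold clamp, Rmax, Rmin. repeat destruct Rle_dec; lra. Qed.

Lemma Rabs_legendre_series_minus_sum_n_le (s : nat -> R) (A q : R) N y :
  0 <= q < 1 -> 0 <= A -> (forall k, Rabs (s k) <= A * q ^ k) -> -1 <= y <= 1 ->
  Rabs (legendre_series s y - sum_n (fun k => s k * L k y) N) <= A * q ^ S N / (1 - q).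
Proof.
  intros Hq HA Hs Hy. apply Rabs_Series_minus_sum_n_le; [exact Hq | exact HA |].
  intro k. rewrite Rabs_mult.
  pose proof (Rabs_legendre_le_1 k y Hy). pose proof (Hs k). pose proof (Rabs_pos (s k)). nra.
Qed.

(* [filterlim_RInt] asks for uniform convergence on all of [R]; composing with [clamp]
   makes the Legendre expansion converge uniformly without changing it on [[-1, 1]]. *)
Lemma is_series_a0 (s : nat -> R) (A q : R) m n :
  0 <= q < 1 -> 0 <= A -> (forall k, Rabs (s k) <= A * q ^ k) -> (2 <= m)%nat -> (2 <= n)%nat ->
  is_series (fun k => s k * bs_coef m n k) (a0 s m n).
Proof.
  intros Hq HA Hs Hm Hn.
  set (E y := bs_eta m y * bs_eta n y).
  set (f N x := sum_n (fun k => s k * L k (clamp x)) N * E (clamp x)).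
  set (g x := legendre_series s (clamp x) * E (clamp x)).
  assert (Hf : forall N, is_RInt (f N) (-1) 1 (sum_n (fun k => s k * bs_coef m n k) N)).
  { intro N. apply (is_RInt_ext (fun x => sum_n (fun k => s k * (L k x * E x)) N)).
    { intros x Hx. rewrite Rmin_left, Rmax_right in Hx by lra.
      unfold f. rewrite clamp_id by lra. symmetry.
      transitivity (sum_n (fun k => mult (s k * L k x) (E x)) N).
      - rewrite sum_n_mult_r. reflexivity.
      - apply sum_n_ext. intro k. unfold mult; simpl. ring. }
    apply is_RInt_sum_n. intro k.
    apply (is_RInt_scal (V := R_NormedModule)), (RInt_correct (V := R_CompleteNormedModule)).
    apply ex_RInt_bs_coef. }
  assert (Hconv : filterlim f eventually (locally (T := fct_UniformSpace R R_CompleteNormedModule) g)).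
  { apply (filterlim_fct_of_bound _ _ (fun N => A * q ^ S N / (1 - q))).
    - intros N x. pose proof (clamp_in x).
      unfold f, g. rewrite <- Rmult_minus_distr_r, Rabs_mult, Rabs_minus_sym.
      pose proof (Rabs_legendre_series_minus_sum_n_le s A q N (clamp x) Hq HA Hs (clamp_in x)).
      pose proof (Rabs_bs_eta_mul_le_1 m n (clamp x) Hm Hn (clamp_in x)).
      pose proof (Rabs_pos (E (clamp x))).
      pose proof (Rabs_pos (legendre_series s (clamp x) - sum_n (fun k => s k * L k (clamp x)) N)).
      unfold E in *. nra.
    - assert (Hgeom : is_lim_seq (fun N => q ^ N) 0) by (apply is_lim_seq_geom; rewrite Rabs_right; lra).
      pose proof (is_lim_seq_scal_r _ (A / (1 - q)) _ (is_lim_seq_scal_r _ q _ Hgeom)) as Hlim.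
      simpl in Hlim. rewrite !Rmult_0_l in Hlim.
      refine (is_lim_seq_ext _ _ _ _ Hlim). intro N. simpl. field. lra. }
  destruct (filterlim_RInt f (-1) 1 eventually _ g _ Hf Hconv) as [I [HI Hg]].
  replace (a0 s m n) with I; [exact HI|].
  unfold a0. rewrite <- (is_RInt_unique _ _ _ _ Hg).
  apply RInt_ext. intros x Hx. rewrite Rmin_left, Rmax_right in Hx by lra.
  unfold g, E. rewrite clamp_id by lra. symmetry. apply Rmult_assoc.
Qed.

Lemma a0_sym s m n : a0 s m n = a0 s n m.
Proof.
  unfold a0. apply RInt_ext. intros x _.
  rewrite !Rmult_assoc, (Rmult_comm (bs_eta m x)). reflexivity.
Qed.

Lemma Rabs_a0_le (s : nat -> R) (A q : R) m n :
  0 <= q < 1 -> 0 <= A -> (forall k, Rabs (s k) <= A * q ^ k) -> (2 <= m)%nat -> (m <= n)%nat ->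
  Rabs (a0 s m n) <= 2 * A * q ^ (n - m - 2) / (1 - q).
Proof.
  intros Hq HA Hs Hm Hmn.
  rewrite <- (is_series_unique _ _ (is_series_a0 s A q m n Hq HA Hs Hm ltac:(lia))).
  apply Rabs_Series_le_of_vanishing; [exact Hq | lra | |].
  - intro k. rewrite Rabs_mult.
    pose proof (Hs k). pose proof (Rabs_bs_coef_le_2 m n k Hm ltac:(lia)).
    pose proof (Rabs_pos (s k)). pose proof (Rabs_pos (bs_coef m n k)). pose proof (pow_le q k). nra.
  - intros k Hk. rewrite bs_coef_zero by lia. ring.
Qed.

Lemma pow_sub_2_le q d : 0 < q <= 1 -> q ^ (d - 2) <= q ^ d / q ^ 2.
Proof.
  intro Hq. pose proof (pow_lt q 2 ltac:(lra)).
  apply (Rmult_le_reg_r (q ^ 2)); [lra|].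
  unfold Rdiv. rewrite Rmult_assoc, Rinv_l, Rmult_1_r, <- pow_add by lra.
  replace (d - 2 + 2)%nat with (d + (d - 2 + 2 - d))%nat by lia.
  rewrite pow_add. pose proof (pow_le q d ltac:(lra)).
  pose proof (pow_incr q 1 (d - 2 + 2 - d) ltac:(lra)). rewrite pow1 in *. nra.
Qed.

Lemma Rabs_a0_le_pow (s : nat -> R) (A q : R) m n :
  0 < q < 1 -> 0 <= A -> (forall k, Rabs (s k) <= A * q ^ k) -> (2 <= m)%nat -> (m <= n)%nat ->
  Rabs (a0 s m n) <= 2 * A / ((1 - q) * q ^ 2) * q ^ (n - m).
Proof.
  intros Hq HA Hs Hm Hmn. pose proof (pow_lt q 2 ltac:(lra)).
  eapply Rle_trans; [apply (Rabs_a0_le s A q m n); auto; lra|].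
  apply Rle_trans with (2 * A * (q ^ (n - m) / q ^ 2) / (1 - q)).
  - apply Rmult_le_compat_r; [left; apply Rinv_0_lt_compat; lra|].
    apply Rmult_le_compat_l; [lra | apply pow_sub_2_le; lra].
  - right. field. lra.
Qed.

Lemma exp_mul_INR r k : exp (r * INR k) = exp r ^ k.
Proof.
  induction k as [|k IH]; [simpl; rewrite Rmult_0_r; apply exp_0|].
  rewrite S_INR, Rmult_plus_distr_l, Rmult_1_r, exp_plus, IH. simpl. ring.
Qed.

Theorem mainTheorem3 :
  forall (eta C_eta : R), 0 < eta -> 0 < C_eta ->
  exists C : R, 0 < C /\
    forall s : nat -> R,
      (forall k : nat, Rabs (s k) <= C_eta * exp (- eta * INR k)) ->
      forall m n : nat, (2 <= m)%nat -> (2 <= n)%nat ->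
        Rabs (a0 s m n) <= C * exp (- eta * Rabs (INR n - INR m)).
Proof.
  intros eta Ce Heta HCe.
  set (q := exp (- eta)).
  assert (Hq : 0 < q < 1) by (split; [apply exp_pos | rewrite <- exp_0; apply exp_increasing; lra]).
  pose proof (pow_lt q 2 ltac:(lra)).
  exists (2 * Ce / ((1 - q) * q ^ 2)). split.
  { apply Rdiv_lt_0_compat; [lra | apply Rmult_lt_0_compat; lra]. }
  intros s Hs.
  assert (Hs' : forall k, Rabs (s k) <= Ce * q ^ k) by (intro k; unfold q; rewrite <- exp_mul_INR; apply Hs).
  assert (Hle : forall m n, (2 <= m)%nat -> (m <= n)%nat ->
            Rabs (a0 s m n) <= 2 * Ce / ((1 - q) * q ^ 2) * exp (- eta * Rabs (INR n - INR m))).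
  { intros m n Hm Hmn.
    rewrite <- minus_INR, (Rabs_right (INR (n - m))), exp_mul_INR by (exact Hmn || apply Rle_ge, pos_INR).
    apply Rabs_a0_le_pow; auto; lra. }
  intros m n Hm Hn.
  destruct (Nat.le_ge_cases m n) as [Hmn | Hnm].
  - exact (Hle m n Hm Hmn).
  - rewrite a0_sym, Rabs_minus_sym. exact (Hle n m Hn Hnm).
Qed.
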